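(* Let $\alpha_1,\alpha_2,\alpha_3>0$ with $\alpha_1^{-2}=\alpha_2^{-2}+\alpha_3^{-2}$, let $a_1=-\alpha_2\alpha_3/\alpha_1$, $a_2=\alpha_3\alpha_1/\alpha_2$, $a_3=\alpha_1\alpha_2/\alpha_3$, and let $T$ be the real $7\times7$ matrix $$T=\begin{pmatrix}0&-\frac{\alpha_1}{2}&\frac{\alpha_2}{2}&\frac{\alpha_3}{2}&\frac{\alpha_1}{2}&-\frac{\alpha_2}{2}&-\frac{\alpha_3}{2}\\ \alpha_1&-2a_1&0&0&0&-\alpha_3&-\alpha_2\\ \alpha_2&0&-2a_2&0&\alpha_3&0&\alpha_1\\ \alpha_3&0&0&-2a_3&\alpha_2&\alpha_1&0\\ -\alpha_1&0&\alpha_3&\alpha_2&2a_1&0&0\\ -\alpha_2&-\alpha_3&0&-\alpha_1&0&2a_2&0\\ -\alpha_3&-\alpha_2&-\alpha_1&0&0&0&2a_3\end{pmatrix}.$$ Let $\mathbf{a}=(0,\alpha_1,\alpha_2,\alpha_3,\alpha_1,\alpha_2,\alpha_3)^{\mathrm T}$ and let $\lambda>0$ with $\lambda^2=a_2^2-a_1a_3$. Then $T\mathbf{a}=0$, and there exist real constants $b_1,\dots,b_5,c_1,\dots,c_5,d_1,\dots,d_6$ such that the nonzero vectors $\mathbf{b}_+=(b_1,b_2,0,b_3,b_4,0,b_5)^{\mathrm T}$, $\mathbf{b}_-=(b_1,b_4,0,b_5,b_2,0,b_3)^{\mathrm T}$, $\mathbf{c}_+=(c_1,0,c_2,c_3,0,c_4,c_5)^{\mathrm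 T}$, $\mathbf{c}_-=(c_1,0,c_4,c_5,0,c_2,c_3)^{\mathrm T}$, $\mathbf{d}_+=(0,d_1,d_2,d_3,d_4,d_5,d_6)^{\mathrm T}$, $\mathbf{d}_-=(0,d_4,d_5,d_6,d_1,d_2,d_3)^{\mathrm T}$ satisfy $T\mathbf{b}_\pm=\pm\lambda\mathbf{b}_\pm$, $T\mathbf{c}_\pm=\pm\lambda\mathbf{c}_\pm$, $T\mathbf{d}_\pm=\pm3\lambda\mathbf{d}_\pm$, and for each choice of sign the pair $\{\mathbf{b}_\pm,\mathbf{c}_\pm\}$ is linearly independent. *)

From HB Require Import structures.
From mathcomp Require Import all_boot all_order all_algebra.
From mathcomp Require Import reals.
Set Implicit Arguments. Unset Strict Implicit. Unset Printing Implicit Defensive.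
Import Order.TTheory GRing.Theory Num.Theory.
Local Open Scope ring_scope.

Definition vec7 {R : ringType} (x1 x2 x3 x4 x5 x6 x7 : R) : 'cV[R]_7 :=
  \col_(i < 7) nth 0 [:: x1; x2; x3; x4; x5; x6; x7] i.

Definition Tmat {R : realType} (al1 al2 al3 : R) : 'M[R]_7 :=
  let a1 := - (al2 * al3 / al1) in
  let a2 := al3 * al1 / al2 in
  let a3 := al1 * al2 / al3 in
  \matrix_(i < 7, j < 7) nth 0 (nth [::] [::
    [:: 0; - (al1 / 2); al2 / 2; al3 / 2; al1 / 2; - (al2 / 2); - (al3 / 2)];
    [:: al1; - (2 * a1); 0; 0; 0; - al3; - al2];
    [:: al2; 0; - (2 * a2); 0; al3; 0; al1];
    [:: al3; 0; 0; - (2 * a3); al2; al1; 0];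
    [:: - al1; 0; al3; al2; 2 * a1; 0; 0];
    [:: - al2; - al3; 0; - al1; 0; 2 * a2; 0];
    [:: - al3; - al2; - al1; 0; 0; 0; 2 * a3]] i) j.

From HB Require Import structures.
From mathcomp Require Import all_boot all_order all_algebra.
From mathcomp Require Import reals.
From mathcomp Require Import ring lra.
Import Order.TTheory GRing.Theory Num.Theory.
Local Open Scope ring_scope.

(* With u = 1/al1, v = 1/al2, w = 1/al3 the matrix S = u v w T has polynomial
   entries, the hypothesis on the al_i becomes u^2 = v^2 + w^2, and
   mu = u v w lam satisfies mu^2 = v^4 + v^2 w^2 + w^4.  If S^2 e = p^2 e, then
   S e + p e and S e - p e are eigenvectors of S for p and -p; here
   e = (0,w,0,-u,-w,0,u) and e = (0,0,w,-v,0,-w,v) for p = mu, and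
   e = (0,u^3,v^3,w^3,-u^3,-v^3,-w^3) for p = 3 mu.  Each e is odd and S e is
   even under the exchange of coordinates i and i + 3 (1 <= i <= 3), so the
   eigenvector for -p is the one for p with these coordinates exchanged. *)

Lemma scale_vec7 (R : nzRingType) (c x0 x1 x2 x3 x4 x5 x6 : R) :
  c *: vec7 x0 x1 x2 x3 x4 x5 x6
  = vec7 (c * x0) (c * x1) (c * x2) (c * x3) (c * x4) (c * x5) (c * x6).
Proof.
by apply/matrixP => i j; rewrite !mxE; case: i => [[|[|[|[|[|[|[|//]]]]]]] ?].
Qed.

Lemma col_neq0 {R : nzRingType} {n} {x : 'cV[R]_n} (i : 'I_n) : x i 0 != 0 -> x != 0.
Proof. by apply: contraNneq => ->; rewrite mxE. Qed.

Lemma free_pair {F : fieldType} {n} {b c : 'cV[F]_n} (i : 'I_n) :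
  b != 0 -> b i 0 = 0 -> c i 0 != 0 -> free [:: b; c].
Proof.
move=> b0 bi0 ci0; rewrite free_cons span_seq1 seq1_free (col_neq0 _ ci0) andbT.
apply/vlineP => -[k bE]; move: bi0; rewrite bE mxE => /eqP.
rewrite mulf_eq0 (negbTE ci0) orbF => /eqP k0.
by move: b0; rewrite bE k0 scale0r eqxx.
Qed.

Lemma free_pair_neq0 {F : fieldType} {vT : vectType F} {b c : vT} :
  free [:: b; c] -> b != 0 /\ c != 0.
Proof. by rewrite free_directv !inE negb_or ![0 == _]eq_sym => /andP[/andP[]]. Qed.

Lemma Tmat_kernel (R : realType) (al1 al2 al3 : R) :
  al1 != 0 -> al2 != 0 -> al3 != 0 ->
  Tmat al1 al2 al3 *m vec7 0 al1 al2 al3 al1 al2 al3 = 0.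
Proof.
move=> a1 a2 a3; apply/matrixP => i j.
rewrite !mxE !big_ord_recr big_ord0 /= !mxE /=.
by case: i => [[|[|[|[|[|[|[|//]]]]]]] ?] /=; field; rewrite ?a1 ?a2 ?a3.
Qed.

Definition Smat {R : realType} (u v w : R) : 'M[R]_7 :=
  (u * v * w) *: Tmat u^-1 v^-1 w^-1.

Lemma Tmat_eigen {R : realType} {al1 al2 al3 k l : R} {x : 'cV[R]_7} :
  al1 != 0 -> al2 != 0 -> al3 != 0 ->
  Smat al1^-1 al2^-1 al3^-1 *m x = k *: x -> al1 * al2 * al3 * k = l ->
  Tmat al1 al2 al3 *m x = l *: x.
Proof.
move=> a1 a2 a3; rewrite /Smat !invrK -scalemxAl.
set c := _ * _ * _ => Sx <-; have c0 : c != 0 by rewrite !mulf_neq0 ?invr_eq0.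
rewrite -[LHS](scalerK c0) Sx scalerA; congr (_ *: _).
by rewrite /c; field; rewrite ?a1 ?a2 ?a3.
Qed.

Section ScaledMatrix.

Context {R : realType} {u v w : R}.
Hypotheses (u_gt0 : 0 < u) (v_gt0 : 0 < v) (w_gt0 : 0 < w).
Hypothesis pyth : u ^+ 2 = v ^+ 2 + w ^+ 2.

Let D := v ^+ 4 + v ^+ 2 * w ^+ 2 + w ^+ 4.

Lemma Smat_vec7 (x0 x1 x2 x3 x4 x5 x6 : R) :
  Smat u v w *m vec7 x0 x1 x2 x3 x4 x5 x6 =
  vec7 (v * w / 2 * (x4 - x1) + u * w / 2 * (x2 - x5) + u * v / 2 * (x3 - x6))
       (v * w * x0 + 2 * u ^+ 2 * x1 - u * v * x5 - u * w * x6)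
       (u * w * x0 - 2 * v ^+ 2 * x2 + u * v * x4 + v * w * x6)
       (u * v * x0 - 2 * w ^+ 2 * x3 + u * w * x4 + v * w * x5)
       (- (v * w * x0) + u * v * x2 + u * w * x3 - 2 * u ^+ 2 * x4)
       (- (u * w * x0) - u * v * x1 - v * w * x3 + 2 * v ^+ 2 * x5)
       (- (u * v * x0) - u * w * x1 - v * w * x2 + 2 * w ^+ 2 * x6).
Proof.
have [u0 v0 w0] : [/\ u != 0, v != 0 & w != 0] by rewrite !gt_eqF.
apply/matrixP => i j; rewrite -scalemxAl !mxE !big_ord_recr big_ord0 /= !mxE /=.
by case: i => [[|[|[|[|[|[|[|//]]]]]]] ?] /=; field; rewrite u0 v0 w0.
Qed.

(* The second argument is always the opposite of the first: keeping it
   separate makes [bvec p (-p)] and [bvec (-p) p] (likewise for [cvec] and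
   [dvec]) literally the two vectors of a +/- pair in the statement. *)
Definition bvec (p q : R) : 'cV[R]_7 :=
  vec7 (- (v * (u ^+ 2 + w ^+ 2))) (w * (u ^+ 2 + p)) 0 (u * (w ^+ 2 + q))
       (w * (u ^+ 2 + q)) 0 (u * (w ^+ 2 + p)).

Definition cvec (p q : R) : 'cV[R]_7 :=
  vec7 (u * (w ^+ 2 - v ^+ 2)) 0 (- (w * (v ^+ 2 + q))) (v * (w ^+ 2 + q))
       0 (- (w * (v ^+ 2 + p))) (v * (w ^+ 2 + p)).

Definition dvec (p q : R) : 'cV[R]_7 :=
  let d1 r := u * (2 * u ^+ 4 + v ^+ 4 + w ^+ 4 + r * u ^+ 2) in
  let d2 r := v * (r * v ^+ 2 - u ^+ 4 - 2 * v ^+ 4 - w ^+ 4) in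
  let d3 r := w * (r * w ^+ 2 - u ^+ 4 - v ^+ 4 - 2 * w ^+ 4) in
  vec7 0 (d1 p) (d2 p) (d3 p) (d1 q) (d2 q) (d3 q).

Lemma Smat_bvec p : p ^+ 2 = D ->
  Smat u v w *m bvec p (- p) = p *: bvec p (- p) /\
  Smat u v w *m bvec (- p) p = (- p) *: bvec (- p) p.
Proof.
by rewrite /D => p2; split; rewrite Smat_vec7 scale_vec7; congr vec7; field: pyth p2.
Qed.

Lemma Smat_cvec p : p ^+ 2 = D ->
  Smat u v w *m cvec p (- p) = p *: cvec p (- p) /\
  Smat u v w *m cvec (- p) p = (- p) *: cvec (- p) p.
Proof.
by rewrite /D => p2; split; rewrite Smat_vec7 scale_vec7; congr vec7; field: pyth p2.
Qed.

Lemma Smat_dvec p : p ^+ 2 = 9 * D ->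
  Smat u v w *m dvec p (- p) = p *: dvec p (- p) /\
  Smat u v w *m dvec (- p) p = (- p) *: dvec (- p) p.
Proof.
by rewrite /D => p2; split; rewrite Smat_vec7 scale_vec7; congr vec7; field: pyth p2.
Qed.

Lemma bvec_cvec_free m : m ^+ 2 = D ->
  free [:: bvec m (- m); cvec m (- m)] /\ free [:: bvec (- m) m; cvec (- m) m].
Proof.
move=> m2; have vm : v ^+ 2 - m != 0.
  have vw_gt0 : 0 < v ^+ 2 * w ^+ 2 + w ^+ 4 by rewrite addr_gt0 ?mulr_gt0 ?exprn_gt0.
  rewrite subr_eq0; apply/eqP => vm; move: m2; rewrite -vm -exprM /D; lra.
have b0 p q : bvec p q != 0.
  apply: (col_neq0 ord0); rewrite mxE /= oppr_eq0.
  by rewrite gt_eqF // mulr_gt0 // addr_gt0 // exprn_gt0.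
split; [apply: (free_pair 2%:R) | apply: (free_pair 5%:R)];
  by rewrite //= ?mxE //= oppr_eq0 mulf_neq0 // gt_eqF.
Qed.

Lemma dvec_neq0 p : 0 < p -> dvec p (- p) != 0 /\ dvec (- p) p != 0.
Proof.
move=> p_gt0; have d1_gt0 : 0 < u * (2 * u ^+ 4 + v ^+ 4 + w ^+ 4 + p * u ^+ 2).
  by rewrite mulr_gt0 // !addr_gt0 ?mulr_gt0 ?exprn_gt0.
split; [apply: (col_neq0 1%:R) | apply: (col_neq0 4%:R)];
  by rewrite mxE /= gt_eqF.
Qed.

End ScaledMatrix.

Theorem proposition5p5 (R : realType) (al1 al2 al3 lam : R)
  (h1 : 0 < al1) (h2 : 0 < al2) (h3 : 0 < al3)
  (hal : al1 ^- 2 = al2 ^- 2 + al3 ^- 2)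
  (hlam : 0 < lam)
  (hlam2 : lam ^+ 2 = (al3 * al1 / al2) ^+ 2
                      - (- (al2 * al3 / al1)) * (al1 * al2 / al3)) :
  Tmat al1 al2 al3 *m vec7 0 al1 al2 al3 al1 al2 al3 = 0 /\
  exists (b1 b2 b3 b4 b5 c1 c2 c3 c4 c5 d1 d2 d3 d4 d5 d6 : R),
    let bp := vec7 b1 b2 0 b3 b4 0 b5 in
    let bm := vec7 b1 b4 0 b5 b2 0 b3 in
    let cp := vec7 c1 0 c2 c3 0 c4 c5 in
    let cm := vec7 c1 0 c4 c5 0 c2 c3 in
    let dp := vec7 0 d1 d2 d3 d4 d5 d6 in
    let dm := vec7 0 d4 d5 d6 d1 d2 d3 in
    [/\ bp != 0, bm != 0, cp != 0 & cm != 0] /\ (dp != 0 /\ dm != 0) /\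
    [/\ Tmat al1 al2 al3 *m bp = lam *: bp,
        Tmat al1 al2 al3 *m bm = (- lam) *: bm,
        Tmat al1 al2 al3 *m cp = lam *: cp &
        Tmat al1 al2 al3 *m cm = (- lam) *: cm] /\
    [/\ Tmat al1 al2 al3 *m dp = (3 * lam) *: dp &
        Tmat al1 al2 al3 *m dm = (- (3 * lam)) *: dm] /\
    free [:: bp; cp] /\ free [:: bm; cm].
Proof.
have [a1 a2 a3] : [/\ al1 != 0, al2 != 0 & al3 != 0] by rewrite !gt_eqF.
split; first exact: Tmat_kernel.
pose u := al1^-1; pose v := al2^-1; pose w := al3^-1; pose m := u * v * w * lam.
have [u_gt0 v_gt0 w_gt0] : [/\ 0 < u, 0 < v & 0 < w] by rewrite !invr_gt0.
have pyth : u ^+ 2 = v ^+ 2 + w ^+ 2 by rewrite !exprVn.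
have m2 : m ^+ 2 = v ^+ 4 + v ^+ 2 * w ^+ 2 + w ^+ 4.
  transitivity (v ^+ 4 + u ^+ 2 * w ^+ 2); last by rewrite pyth; ring.
  by rewrite exprMn hlam2 /u /v /w; field; rewrite a1 a2 a3.
have lamE : al1 * al2 * al3 * m = lam by rewrite /m /u /v /w; field; rewrite a1 a2 a3.
have [Sbp Sbm] := Smat_bvec u_gt0 v_gt0 w_gt0 pyth m m2.
have [Scp Scm] := Smat_cvec u_gt0 v_gt0 w_gt0 pyth m m2.
have m9 : (3 * m) ^+ 2 = 9 * (v ^+ 4 + v ^+ 2 * w ^+ 2 + w ^+ 4).
  by rewrite exprMn m2 -natrX.
have [Sdp Sdm] := Smat_dvec u_gt0 v_gt0 w_gt0 pyth (3 * m) m9.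
have [Fp Fm] := bvec_cvec_free u_gt0 v_gt0 w_gt0 m m2.
have [[bp0 cp0] [bm0 cm0]] := (free_pair_neq0 Fp, free_pair_neq0 Fm).
have m3_gt0 : 0 < 3 * m by rewrite !mulr_gt0.
have [dp0 dm0] := dvec_neq0 u_gt0 v_gt0 w_gt0 (3 * m) m3_gt0.
have T_eig := Tmat_eigen a1 a2 a3.
(* The witnesses are fixed by unifying the first goals with [bp0], ..., [dm0]. *)
do 16!eexists; cbv zeta; split.
  by split; [exact: bp0 | exact: bm0 | exact: cp0 | exact: cm0].
split; first by split; [exact: dp0 | exact: dm0].
split; first split.
- exact: T_eig Sbp lamE.
- by apply: T_eig Sbm _; rewrite mulrN lamE.
- exact: T_eig Scp lamE.
- by apply: T_eig Scm _; rewrite mulrN lamE.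
split; first split.
- by apply: T_eig Sdp _; rewrite mulrCA lamE.
- by apply: T_eig Sdm _; rewrite mulrN mulrCA lamE.
by split.
Qed.
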